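(* Let $\sigma_N$ be a preference profile of $n$ metrics over $m$ alternatives, let $\epsilon\ge0$, and let $K\subseteq N$ be a nonempty subset satisfying $\epsilon$-positional proportionality. Then for every score vector $s$ and every alternative $a\in A$, $$\left|f_s(a,\sigma_N)-f_s(a,\sigma_K)\right|\le\epsilon.$$
   Context: Let $N=[n]$ be a set of metrics and $A=[m]$ a set of alternatives. Each metric $i\in N$ has a ranking $\sigma_i$ of $A$; $\sigma_i(a)$ is the position of $a$ (1 is best). For $K\subseteq N$ write $\sigma_K=\{\sigma_i:i\in K\}$. For $K\subseteq N$, $r\in[m]$, $a\in A$, let $C(K,r,a)=|\{i\in K:\sigma_i(a)\le r\}|$. A nonempty $K\subseteq N$ satisfies $\epsilon$-positional proportionality if for all $a\in A$ and $r\in[m]$, $\left|\frac{C(N,r,a)}{|N|}-\frac{C(K,r,a)}{|K|}\right|\le\epsilon$. A scoring rule is given by a score vector $s\in\mathbb{R}^m$ with $s_1\ge s_2\ge\dots\ge s_m$, normalized so that $s_1=1$ and $s_m=0$. For a nonempty $K\subseteq N$, the average score of $a$ is $f_s(a,\sigma_K)=\frac{1}{|K|}\sum_{i\in K}s_{\sigma_i(a)}$. *)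

From mathcomp Require Import all_boot all_order all_algebra all_fingroup.
Set Implicit Arguments. Unset Strict Implicit. Unset Printing Implicit Defensive.
Import Order.TTheory GRing.Theory Num.Theory.
Local Open Scope ring_scope.

(* A profile: metric i : 'I_n ranks alternatives 'I_m by a bijection
   sigma i : {perm 'I_m}; the 1-based position of a is (sigma i a).+1. *)
Definition profile (n m : nat) := 'I_n -> {perm 'I_m}.

Definition pos n m (sigma : profile n m) (i : 'I_n) (a : 'I_m) : nat :=
  (sigma i a).+1.

Definition Ccount n m (sigma : profile n m) (K : {set 'I_n}) (r : nat) (a : 'I_m) : nat :=
  #|[set i in K | (pos sigma i a <= r)%N]|.

Definition pos_prop (R : realFieldType) n m (sigma : profile n m)
    (eps : R) (K : {set 'I_n}) : Prop :=
  K != set0 /\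
  forall (a : 'I_m) (r : nat), (1 <= r <= m)%N ->
    `| (Ccount sigma [set: 'I_n] r a)%:R / #|[set: 'I_n]|%:R
       - (Ccount sigma K r a)%:R / #|K|%:R | <= eps.

(* Score vector s_1 >= ... >= s_m with s_1 = 1, s_m = 0, indexed by
   1-based positions (values outside 1..m irrelevant). *)
Definition score_vector (R : realFieldType) (m : nat) (s : nat -> R) : Prop :=
  (forall j k, (1 <= j)%N -> (j <= k)%N -> (k <= m)%N -> s k <= s j) /\
  s 1%N = 1 /\ s m = 0.

Definition avg_score (R : realFieldType) n m (s : nat -> R) (sigma : profile n m)
    (K : {set 'I_n}) (a : 'I_m) : R :=
  (#|K|%:R)^-1 * \sum_(i in K) s (pos sigma i a).

From mathcomp Require Import all_boot all_order all_algebra all_fingroup.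
Set Implicit Arguments. Unset Strict Implicit. Unset Printing Implicit Defensive.
Import Order.TTheory GRing.Theory Num.Theory.
Local Open Scope ring_scope.

(* Abel summation: since s_m = 0, a score s_p is the sum of the drops
   s_r - s_(r+1) over the positions r >= p.  Hence f_s(a, sigma_K) is the
   combination, with nonnegative weights s_r - s_(r+1), of the shares
   C(K, r, a) / |K|.  Positional proportionality bounds each difference of
   shares by eps, and the weights add up to s_1 - s_m = 1. *)

Lemma ler_norm_weighted_sumB (R : numDomainType) (I : eqType) (r : seq I)
    (w x y : I -> R) (e : R) :
  {in r, forall i, 0 <= w i} -> {in r, forall i, `|x i - y i| <= e} ->
  `|\sum_(i <- r) w i * x i - \sum_(i <- r) w i * y i|
    <= e * \sum_(i <- r) w i.
Proof.
move=> w_ge0 xy_close; rewrite -sumrB mulr_sumr.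
apply: le_trans (ler_norm_sum _ _ _) _; rewrite !big_seq.
apply: ler_sum => i ri; rewrite -mulrBr normrM ger0_norm ?w_ge0 // mulrC.
by rewrite ler_wpM2r ?w_ge0 ?xy_close.
Qed.

Lemma sum_drops (V : zmodType) (s : nat -> V) (p q : nat) : (p <= q)%N ->
  \sum_(p <= r < q) (s r - s r.+1) = s p - s q.
Proof.
move=> le_pq; rewrite -opprB -telescope_sumr // -sumrN.
by apply: eq_bigr => r _; rewrite opprB.
Qed.

Lemma sum_drops_from (V : zmodType) (s : nat -> V) (p q : nat) :
  (1 <= p <= q)%N ->
  s p - s q = \sum_(1 <= r < q | (p <= r)%N) (s r - s r.+1).
Proof.
by case/andP=> p_gt0 le_pq; rewrite -sum_drops // (big_nat_widenl _ _ _ _ _ p_gt0).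
Qed.

Definition share {R : realFieldType} n m (sigma : profile n m) (K : {set 'I_n})
    (r : nat) (a : 'I_m) : R :=
  (Ccount sigma K r a)%:R / #|K|%:R.

Lemma avg_score_shares (R : realFieldType) n m (s : nat -> R)
    (sigma : profile n m) (K : {set 'I_n}) (a : 'I_m) :
  s m = 0 ->
  avg_score s sigma K a = \sum_(1 <= r < m) (s r - s r.+1) * share sigma K r a.
Proof.
move=> sm; rewrite /avg_score.
have pos_range i : (1 <= pos sigma i a <= m)%N by rewrite /pos ltn_ord.
under eq_bigr => i _ do rewrite -[s _]subr0 -sm sum_drops_from ?pos_range //.
rewrite (exchange_big_dep xpredT) //= mulr_sumr; apply: eq_bigr => r _.
rewrite (eq_bigl [in [set i in K | (pos sigma i a <= r)%N]]); last first.
  by move=> i; rewrite inE.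
by rewrite sumr_const -[(_ - _) *+ _]mulr_natr mulrCA [_^-1 * _]mulrC.
Qed.

Theorem theorem5 (R : realFieldType) (n m : nat) (sigma : profile n m)
    (eps : R) (K : {set 'I_n}) :
  0 <= eps ->
  pos_prop sigma eps K ->
  forall (s : nat -> R), score_vector m s ->
  forall a : 'I_m,
    `| avg_score s sigma [set: 'I_n] a - avg_score s sigma K a | <= eps.
Proof.
move=> _ [_ shares_close] s [s_mono [s1 sm]] a.
have m_gt0 : (0 < m)%N := leq_ltn_trans (leq0n a) (ltn_ord a).
rewrite !avg_score_shares //.
apply: le_trans (ler_norm_weighted_sumB _ _) _.
- move=> r; rewrite mem_index_iota => /andP[r_gt0 r_lt_m].
  by rewrite subr_ge0 s_mono.
- move=> r; rewrite mem_index_iota => /andP[r_gt0 /ltnW r_le_m].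
  by apply: shares_close; rewrite r_gt0.
by rewrite sum_drops // s1 sm subr0 mulr1.
Qed.
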